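(* Let $(P,h)$ be a floor plan with $P=(p_1,\dots,p_r)$. Suppose there exists $i$ such that $x(p_i)>0$ and, for all $j$ with $x(p_j)=x(p_i)-1$, we have $y(p_j)<y(p_i)$. Let $P'=(p'_1,\dots,p'_r)$ with $p'_i=p_i-(1,0)$ and $p'_k=p_k$ for $k\neq i$. Then $(P',h)<(P,h)$, i.e. $\lambda_{(P',h)}\subsetneq\lambda_{(P,h)}$.
   Context: For $p\in\mathbb{N}^2$, $x(p)$ and $y(p)$ denote its coordinates. A floor plan is a pair $(P,h)$ of sequences $P=(p_1,\dots,p_r)$ with $p_i\in\mathbb{N}^2$ and $h=(h_1,\dots,h_r)$ with $h_i$ positive integers. A North-East path is a sequence $(q_1,\dots,q_m)$ in $\mathbb{N}^2$ with $q_{j+1}-q_j\in\{(1,0),(0,1)\}$, originating at $q_1$; its score w.r.t. $(P,h)$ is $\sum_{i:\,p_i\in\{q_1,\dots,q_m\}}h_i$, and $\max\mathrm{score}_{(P,h)}(q)$ is the maximal score of a path originating at $q$. $\lambda_{(P,h)}\subseteq\mathbb{N}^3$ is the $3$-dimensional Young diagram $\{(x,y,z): 0\le z<\max\mathrm{score}_{(P,h)}(x,y)\}$. For floor plans with the same $h$, $(P',h)\le(P,h)$ means $\lambda_{(P',h)}\subseteq\lambda_{(P,h)}$, and $<$ means $\le$ with $\lambda_{(P',h)}\ne\lambda_{(P,h)}$. *)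

From mathcomp Require Import all_boot.
From Stdlib Require Import ClassicalEpsilon.
Set Implicit Arguments. Unset Strict Implicit. Unset Printing Implicit Defensive.

(* Points of N^2 are pairs (x, y) : nat * nat; x(p) = p.1, y(p) = p.2. *)
Definition point := (nat * nat)%type.

Definition floor_plan (P : seq point) (h : seq nat) : Prop :=
  size h = size P /\ forall i, i < size P -> 0 < nth 0 h i.

Definition ne_step (q q' : point) : bool :=
  (q' == (q.1.+1, q.2)) || (q' == (q.1, q.2.+1)).

(* A North-East path (q_1, ..., q_m), m >= 1, is given as q_1 :: qs with
   path ne_step q_1 qs; it originates at q_1. *)
Definition ne_path (q1 : point) (qs : seq point) : bool := path ne_step q1 qs.

Definition score (P : seq point) (h : seq nat) (q1 : point) (qs : seq point) : nat :=
  \sum_(i < size P | nth (0, 0) P i \in q1 :: qs) nth 0 h i.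

Definition is_maxscore (P : seq point) (h : seq nat) (q : point) (m : nat) : Prop :=
  (exists qs, ne_path q qs /\ score P h q qs = m) /\
  (forall qs, ne_path q qs -> score P h q qs <= m).

(* maxscore_{(P,h)}(q): the maximal score (chosen by Hilbert's epsilon
   among the values satisfying is_maxscore; this maximum always exists). *)
Definition maxscore (P : seq point) (h : seq nat) (q : point) : nat :=
  epsilon (inhabits 0) (is_maxscore P h q).

Definition young (P : seq point) (h : seq nat) : nat * nat * nat -> Prop :=
  fun v => let: (x, y, z) := v in z < maxscore P h (x, y).

Definition fp_le (P' P : seq point) (h : seq nat) : Prop :=
  forall v, young P' h v -> young P h v.

Definition fp_lt (P' P : seq point) (h : seq nat) : Prop :=
  fp_le P' P h /\ young P' h <> young P h.

(* Moving p_i = (A+1, b) one step left to (A, b) can only help paths that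
   pass through (A, b).  Such a path can be rerouted one column to the right
   from (A, b) on: it then meets (A+1, b) and keeps every point it had,
   except those of column A at height >= b, and by hypothesis no other p_j
   lies there.  Hence maxscore only decreases.  It decreases strictly at
   (A+1, b): no path from there reaches (A, b), so every such path loses
   h_i > 0 when p_i moves. *)
From mathcomp Require Import all_boot.
From Stdlib Require Import ClassicalEpsilon.
From mathcomp Require Import zify.
Set Implicit Arguments. Unset Strict Implicit.

Lemma bounded_ex_max (A : nat -> Prop) (S : nat) :
  (forall m, A m -> m <= S) -> (exists m, A m) ->
  exists2 m, A m & forall k, A k -> k <= m.
Proof.
move=> ubA [m0 Am0].
pose p m : bool := if excluded_middle_informative (A m) then true else false.
have pP m : reflect (A m) (p m).
  by rewrite /p; case: excluded_middle_informative => ?; constructor.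
have exp : exists m, p m by exists m0; apply/pP.
have ubp m : p m -> m <= S by move/pP; apply: ubA.
case: (ex_maxnP exp ubp) => m /pP Am maxm.
by exists m => // k /pP; apply: maxm.
Qed.

Lemma score_mkcond P h q qs : score P h q qs =
  \sum_(0 <= k < size P) (if nth (0, 0) P k \in q :: qs then nth 0 h k else 0).
Proof. by rewrite /score big_mkcond big_mkord. Qed.

Lemma maxscoreP P h q : is_maxscore P h q (maxscore P h q).
Proof.
apply: epsilon_spec.
have score_ub m : (exists qs, ne_path q qs /\ score P h q qs = m) ->
    m <= \sum_(k < size P) nth 0 h k.
  move=> [qs [_ <-]]; rewrite /score.
  by rewrite [leqRHS](bigID (fun k : 'I__ => nth (0, 0) P k \in q :: qs)) leq_addr.
have [|m [qs [pq <-]] maxm] := bounded_ex_max score_ub.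
  by exists (score P h q [::]), [::].
by exists (score P h q qs); split; [exists qs | move=> qs' pq'; apply: maxm; exists qs'].
Qed.

Lemma score_le_maxscore P h q qs : ne_path q qs -> score P h q qs <= maxscore P h q.
Proof. by have [_] := maxscoreP P h q; apply. Qed.

Lemma maxscore_attained P h q : exists2 qs, ne_path q qs & score P h q qs = maxscore P h q.
Proof. by have [[qs [pq sq]] _] := maxscoreP P h q; exists qs. Qed.

Lemma leq_score P P' h q qs q' qs' : size P' = size P ->
  (forall k, k < size P -> nth (0, 0) P' k \in q :: qs -> nth (0, 0) P k \in q' :: qs') ->
  score P' h q qs <= score P h q' qs'.
Proof.
move=> szP' covered; rewrite !score_mkcond szP' big_nat_cond [leqRHS]big_nat_cond.
apply: leq_sum => k /andP[/andP[_ ltk] _].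
by case: ifP => // /(covered k ltk) ->.
Qed.

Lemma score_set_nth_off_path P h q qs i p : i < size P ->
  nth (0, 0) P i \in q :: qs -> p \notin q :: qs ->
  score (set_nth (0, 0) P i p) h q qs + nth 0 h i = score P h q qs.
Proof.
move=> ltiP onpath offpath.
have szP' : size (set_nth (0, 0) P i p) = size P by rewrite size_set_nth; apply/maxn_idPr.
have iP : i \in index_iota 0 (size P) by rewrite mem_index_iota.
rewrite !score_mkcond szP' !(bigD1_seq i iP (iota_uniq _ _)) /= nth_set_nth /= eqxx.
rewrite (negbTE offpath) onpath add0n addnC; congr (_ + _).
by apply: eq_bigr => k nki; rewrite nth_set_nth /= (negbTE nki).
Qed.

Lemma ne_path_ge q qs r : ne_path q qs -> r \in q :: qs -> q.1 <= r.1 /\ q.2 <= r.2.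
Proof.
elim: qs q => [|q1 qs IH] q /=; first by move=> _; rewrite inE => /eqP ->.
case/andP => step pq1; rewrite inE => /orP[/eqP -> //|rin].
have [ge1 ge2] := IH _ pq1 rin.
by move: step; rewrite /ne_step => /orP[] /eqP E; rewrite E /= in ge1 ge2; lia.
Qed.

Lemma ne_path_shift_right A y rs : ne_path (A, y) rs ->
  exists2 rs', ne_path (A.+1, y) rs' &
    forall r, r \in rs -> r.1 = A \/ r \in (A.+1, y) :: rs'.
Proof.
elim: rs y => [|r0 rs IH] y /=; first by exists [::].
case/andP; rewrite /ne_step /= => /orP[] /eqP -> prs.
  by exists rs => // r; rewrite inE => /orP[/eqP ->|rin]; right; rewrite ?eqxx ?rin ?orbT.
have [rs' prs' shifted] := IH _ prs.
exists ((A.+1, y.+1) :: rs'); first by rewrite /= /ne_step eqxx orbT.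
move=> r; rewrite inE => /orP[/eqP -> //|rin]; first by left.
by case: (shifted r rin) => [|rin']; [left | right; rewrite inE rin' orbT].
Qed.

Lemma ne_path_reroute A b q qs : ne_path q qs -> (A, b) \in q :: qs ->
  exists qs', [/\ ne_path q qs', (A.+1, b) \in q :: qs' &
    forall r, r \in q :: qs -> r \in q :: qs' \/ (r.1 = A /\ b <= r.2)].
Proof.
elim: qs q => [|q1 qs IH] q pq Ab_on.
  move: Ab_on; rewrite inE => /eqP <-.
  exists [:: (A.+1, b)]; split; first by rewrite /ne_path /= /ne_step eqxx.
    by rewrite !inE eqxx orbT.
  by move=> r; rewrite inE => /eqP ->; left; rewrite inE eqxx.
case: (eqVneq q (A, b)) => [Eq | Nq].
  subst q; have [rs' prs' shifted] := ne_path_shift_right pq.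
  exists ((A.+1, b) :: rs'); split; first by rewrite /ne_path /= /ne_step eqxx.
    by rewrite !inE eqxx orbT.
  move=> r; rewrite inE => /orP[/eqP ->|rin]; first by left; rewrite inE eqxx.
  case: (shifted r rin) => [rA|rin']; last by left; rewrite in_cons rin' orbT.
  by right; have [] := ne_path_ge pq (@mem_behead _ (_ :: _) _ rin).
move: Ab_on pq; rewrite in_cons eq_sym (negbTE Nq) /= => Ab_on /andP[step pq1].
have [qs1 [pq1' Ab1_on kept]] := IH q1 pq1 Ab_on.
exists (q1 :: qs1); split; first by rewrite /ne_path /= step.
  by rewrite in_cons Ab1_on orbT.
move=> r; rewrite inE => /orP[/eqP ->|rin]; first by left; rewrite inE eqxx.
by case: (kept r rin) => [rin'|]; [left; rewrite in_cons rin' orbT | right].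
Qed.

Section MoveLeft.

Variables (P : seq point) (h : seq nat) (i A b : nat).
Hypotheses (ltiP : i < size P) (Pi : nth (0, 0) P i = (A.+1, b)).
Hypothesis column_below :
  forall j, j < size P -> (nth (0, 0) P j).1 = A -> (nth (0, 0) P j).2 < b.

Let P' := set_nth (0, 0) P i (A, b).

Let size_P' : size P' = size P.
Proof. by rewrite size_set_nth; apply/maxn_idPr. Qed.

Let nth_P' k : nth (0, 0) P' k = if k == i then (A, b) else nth (0, 0) P k.
Proof. by rewrite nth_set_nth. Qed.

Lemma maxscore_move_left_le q : maxscore P' h q <= maxscore P h q.
Proof.
have [qs pq <-] := maxscore_attained P' h q.
have [Ab_on | Ab_off] := boolP ((A, b) \in q :: qs).
- have [qs' [pq' Ab1_on kept]] := ne_path_reroute pq Ab_on.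
  apply: leq_trans (score_le_maxscore P h pq').
  apply: leq_score size_P' _ => k ltk; rewrite nth_P'.
  case: eqVneq => [-> _|nki /kept [//|[colA geb]]]; first by rewrite Pi.
  by have := column_below ltk colA; rewrite ltnNge geb.
- apply: leq_trans (score_le_maxscore P h pq).
  apply: leq_score size_P' _ => k _; rewrite nth_P'.
  by case: eqVneq => [_ /idPn|//]; rewrite Ab_off.
Qed.

Lemma maxscore_move_left_lt : 0 < nth 0 h i ->
  maxscore P' h (A.+1, b) < maxscore P h (A.+1, b).
Proof.
move=> hi_pos; have [qs pq <-] := maxscore_attained P' h (A.+1, b).
apply: leq_trans (score_le_maxscore P h pq).
have Ab_off : (A, b) \notin (A.+1, b) :: qs.
  by apply/negP => /(ne_path_ge pq) [] /=; rewrite ltnn.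
rewrite -(score_set_nth_off_path h ltiP _ Ab_off) ?Pi ?mem_head //.
by rewrite -addn1 leq_add2l.
Qed.

End MoveLeft.

Theorem lemma5p1 (P : seq point) (h : seq nat) (i : nat) :
  floor_plan P h ->
  i < size P ->
  0 < (nth (0, 0) P i).1 ->
  (forall j, j < size P ->
     (nth (0, 0) P j).1 = (nth (0, 0) P i).1 - 1 ->
     (nth (0, 0) P j).2 < (nth (0, 0) P i).2) ->
  fp_lt (set_nth (0, 0) P i ((nth (0, 0) P i).1 - 1, (nth (0, 0) P i).2)) P h.
Proof.
move=> [_ h_pos] ltiP.
case Pi: (nth (0, 0) P i) => [[|A] b] //= _; rewrite subSS subn0 => column_below.
have le := maxscore_move_left_le h ltiP Pi column_below.
have lt := maxscore_move_left_lt ltiP Pi (h_pos i ltiP).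
set P' := set_nth _ P i _ in le lt *.
split=> [[[x y] z] /= /leq_trans|young_eq]; first exact.
have : young P h (A.+1, b, maxscore P' h (A.+1, b)) by exact: lt.
by rewrite -young_eq /young ltnn.
Qed.
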